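(* Let $\delta,k'$ be non-negative integers with $\delta>k'+1$, and let $r,t$ be non-negative integers such that $\binom{\delta}{2}-k'=\binom{r}{2}+t$ with $0\le t<r$. Then \[\binom{\delta}{3}-\binom{r}{3}-\binom{t}{2}=\sum_{i=2}^{k'+1}(\delta-i).\]
   Context: Binomial coefficients satisfy $\binom{a}{b}=0$ when $0\le a<b$. *)

From mathcomp Require Import all_boot all_order all_algebra.

From mathcomp Require Import all_boot all_order all_algebra.
From mathcomp Require Import zify.
Import GRing.Theory.
Local Open Scope ring_scope.

(* Every n has a unique representation n = C(r, 2) + t with t < r, because
   C(r, 2) + t < C(r + 1, 2).  Write delta = s + 1.  Since
   C(s, 2) < C(delta, 2) - k' <= C(delta, 2), the representation of
   C(delta, 2) - k' is (s, s - k') when k' > 0 and (delta, 0) when k' = 0.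
   In the first case Pascal's rule turns the left-hand side into
   C(s, 2) - C(s - k', 2), which the sum telescopes to; in the second case both
   sides vanish. *)

Lemma bin2S n : 'C(n.+1, 2) = ('C(n, 2) + n)%N.
Proof. by rewrite binS bin1. Qed.

Lemma bin2_addn_inj r t s u :
  (t < r)%N -> (u < s)%N -> ('C(r, 2) + t = 'C(s, 2) + u)%N -> r = s /\ t = u.
Proof.
have lt_repr a b c d : (b < a)%N -> (a < c)%N -> ('C(a, 2) + b < 'C(c, 2) + d)%N.
  move=> lt_ba lt_ac; have := leq_bin2l 2 lt_ac; rewrite bin2S; lia.
move=> lt_tr lt_us E; have [lt_rs|lt_sr|eq_rs] := ltngtP r s.
- by have := lt_repr _ _ _ u lt_tr lt_rs; rewrite E ltnn.
- by have := lt_repr _ _ _ t lt_us lt_sr; rewrite E ltnn.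
- by split=> //; move: E; rewrite eq_rs => /addnI.
Qed.

Lemma sum_telescope_bin2 n k : (k <= n)%N ->
  \sum_(2 <= i < k.+2) (n.+1%:Z - i%:Z) = ('C(n, 2))%:Z - ('C(n - k, 2))%:Z.
Proof.
elim: k => [|k IH] le_kn; first by rewrite big_geq // subn0 subrr.
rewrite big_nat_recr //= IH ?(ltnW le_kn) //.
have -> : (n - k = (n - k.+1).+1)%N by lia.
rewrite bin2S; lia.
Qed.

Theorem lemma3p7 (delta k' r t : nat) :
  (k'.+1 < delta)%N ->
  ('C(delta, 2))%:Z - k'%:Z = ('C(r, 2))%:Z + t%:Z ->
  (t < r)%N ->
  ('C(delta, 3))%:Z - ('C(r, 3))%:Z - ('C(t, 2))%:Z
    = \sum_(2 <= i < k'.+2) (delta%:Z - i%:Z).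
Proof.
case: delta => [|s] // lt_ks E lt_tr.
have Erepr : ('C(s, 2) + s = 'C(r, 2) + t + k')%N by move: E; rewrite bin2S; lia.
case: k' {E} lt_ks Erepr => [|k] lt_ks Erepr.
  have [<- <-] : s.+1 = r /\ 0%N = t.
    by apply: bin2_addn_inj => //; rewrite bin2S; lia.
  by rewrite big_geq // bin0n subrr subr0.
have [<- <-] : s = r /\ (s - k.+1)%N = t by apply: bin2_addn_inj; lia.
rewrite binS sum_telescope_bin2; lia.
Qed.
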